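(* Let $R$ be a commutative ring and $M$ a semisimple $R$-module that has a minimal second representation $M=\sum_{i=1}^n K_i$ whose set of main second attached primes $att^s(M)=\{Ann(K_1),\dots,Ann(K_n)\}$ satisfies $att^s(M)=Min(att^s(M))$ (i.e. these ideals are pairwise incomparable). Then the following are equivalent: (1) $M$ is a multiplication module; (2) every PS-hollow submodule of $M$ is simple; (3) every second submodule of $M$ is simple; (4) $M$ is a comultiplication module.
   Context: A submodule $N\neq 0$ of $M$ is second iff for every ideal $I\leq R$, $IN=N$ or $IN=0$. A second representation of $M$ is an expression $M=\sum_{i=1}^n K_i$ with each $K_i$ a second submodule; it is minimal if the ideals $Ann(K_i)$ are pairwise distinct and no $K_j$ is contained in $\sum_{i\neq j}K_i$. $Min(X)$ denotes the set of minimal elements of a set of ideals $X$ w.r.t. inclusion. An $R$-submodule $N\leq M$ is PS-hollow iff for every ideal $I\leq R$ and every submodule $L\leq M$: $N\subseteq IM+L$ implies $N\subseteq IM$ or $N\subseteq L$. $M$ is multiplication iff every submodule is $IM$ for some ideal $I$; $M$ is comultiplication iff $K=(0:_M(0:_R K))$ for every submodule $K\leq M$. *)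

From mathcomp Require Import all_boot all_order all_algebra.
Set Implicit Arguments. Unset Strict Implicit. Unset Printing Implicit Defensive.
Import GRing.Theory.
Local Open Scope ring_scope.

Section ModuleDefs.
Variables (R : comNzRingType) (M : lmodType R).

Definition ideal (I : R -> Prop) : Prop :=
  I 0 /\ (forall a b, I a -> I b -> I (a + b)) /\ (forall r a, I a -> I (r * a)).

Definition submodule (N : M -> Prop) : Prop :=
  N 0 /\ (forall x y, N x -> N y -> N (x + y)) /\ (forall (r : R) x, N x -> N (r *: x)).

Definition sub_eq (N L : M -> Prop) : Prop := forall x, N x <-> L x.
Definition sub_le (N L : M -> Prop) : Prop := forall x, N x -> L x.
Definition zero_sub : M -> Prop := fun x => x = 0.
Definition full_sub : M -> Prop := fun _ => True.
Definition nonzero_sub (N : M -> Prop) : Prop := ~ sub_eq N zero_sub.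

Definition prod_IN (I : R -> Prop) (N : M -> Prop) : M -> Prop :=
  fun x => forall L, submodule L -> (forall a n, I a -> N n -> L (a *: n)) -> L x.

Definition sum_sub (N L : M -> Prop) : M -> Prop :=
  fun x => exists n l, N n /\ L l /\ x = n + l.

Definition Ann (K : M -> Prop) : R -> Prop :=
  fun r => forall k, K k -> r *: k = 0.

Definition annM (J : R -> Prop) : M -> Prop :=
  fun m => forall r, J r -> r *: m = 0.

Definition ideal_le (I J : R -> Prop) : Prop := forall r, I r -> J r.
Definition ideal_eq (I J : R -> Prop) : Prop := forall r, I r <-> J r.

Definition second (N : M -> Prop) : Prop :=
  submodule N /\ nonzero_sub N /\
  forall I, ideal I -> sub_eq (prod_IN I N) N \/ sub_eq (prod_IN I N) zero_sub.

Definition simple_sub (N : M -> Prop) : Prop :=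
  submodule N /\ nonzero_sub N /\
  forall L, submodule L -> sub_le L N -> sub_eq L zero_sub \/ sub_eq L N.

Definition PS_hollow (N : M -> Prop) : Prop :=
  submodule N /\ nonzero_sub N /\
  forall I L, ideal I -> submodule L ->
    sub_le N (sum_sub (prod_IN I full_sub) L) ->
    sub_le N (prod_IN I full_sub) \/ sub_le N L.

Definition semisimple_mod : Prop :=
  forall N, submodule N -> exists L, submodule L /\
    sub_eq (fun x => N x /\ L x) zero_sub /\ sub_eq (sum_sub N L) full_sub.

Definition multiplication_mod : Prop :=
  forall N, submodule N -> exists I, ideal I /\ sub_eq N (prod_IN I full_sub).

Definition comultiplication_mod : Prop :=
  forall K, submodule K -> sub_eq K (annM (Ann K)).

Definition big_sum_sub (n : nat) (K : 'I_n -> M -> Prop) : M -> Prop :=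
  fun x => exists k : 'I_n -> M, (forall i, K i (k i)) /\ x = \sum_(i < n) k i.

Definition big_sum_sub_but (n : nat) (K : 'I_n -> M -> Prop) (j : 'I_n) : M -> Prop :=
  fun x => exists k : 'I_n -> M, (forall i, i != j -> K i (k i)) /\
                                 x = \sum_(i < n | i != j) k i.

Definition min_second_rep (n : nat) (K : 'I_n -> M -> Prop) : Prop :=
  sub_eq (big_sum_sub K) full_sub /\
  (forall i, second (K i)) /\
  (forall i j, i != j -> ~ ideal_eq (Ann (K i)) (Ann (K j))) /\
  (forall j, ~ sub_le (K j) (big_sum_sub_but K j)).

Definition att_eq_Min (n : nat) (K : 'I_n -> M -> Prop) : Prop :=
  forall i j, ideal_le (Ann (K j)) (Ann (K i)) -> ideal_eq (Ann (K j)) (Ann (K i)).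

End ModuleDefs.

(* Every K_i is second, so Ann(K_i) is a prime ideal, and in a semisimple
   module multiplication by any a outside Ann(K_i) is a bijection of K_i.
   As the primes Ann(K_i) are pairwise incomparable, prime avoidance gives
   separators a_i lying in every Ann(K_j), j <> i, but not in Ann(K_i); then
   a_i M = K_i, and a_i x = 0 exactly when the K_i-component of x vanishes.
   With the separators, each of the four conditions is shown equivalent to
   the simplicity of every K_i. *)
From mathcomp Require Import all_boot all_order all_algebra.
From Stdlib Require Import Classical.
Set Implicit Arguments. Unset Strict Implicit. Unset Printing Implicit Defensive.
Import GRing.Theory.
Local Open Scope ring_scope.

Section Modules.
Variables (R : comNzRingType) (M : lmodType R).
Implicit Types (N L : M -> Prop) (J : R -> Prop).
Hypothesis Mss : semisimple_mod M.

Lemma submodule_sum N m (P : pred 'I_m) (k : 'I_m -> M) :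
  submodule N -> (forall i, P i -> N (k i)) -> N (\sum_(i < m | P i) k i).
Proof. by move=> [N0 [ND _]] Nk; apply: big_ind. Qed.

Lemma submoduleI N L : submodule N -> submodule L -> submodule (fun x => N x /\ L x).
Proof.
move=> [N0 [ND NS]] [L0 [LD LS]]; split=> //; split.
  by move=> x y [Nx Lx] [Ny Ly]; split; [apply: ND | apply: LD].
by move=> r x [Nx Lx]; split; [apply: NS | apply: LS].
Qed.

Lemma submodule_ker (a : R) : submodule (fun x : M => a *: x = 0).
Proof.
split; first by rewrite scaler0.
split; first by move=> x y ax ay; rewrite scalerDr ax ay addr0.
by move=> r x ax; rewrite scalerA mulrC -scalerA ax scaler0.
Qed.

Lemma submodule_prod_IN J N : submodule (prod_IN J N).
Proof.
split; first by move=> L [].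
split=> [x y Jx Jy | r x Jx] L subL Lgen; have [_ [LD LS]] := subL.
  by apply: LD; [apply: Jx | apply: Jy].
by apply: LS; apply: Jx.
Qed.

Lemma prod_IN_le_full J N x : prod_IN J N x -> prod_IN J (@full_sub R M) x.
Proof. by move=> Jx L subL Lgen; apply: Jx => // a m Ja _; apply: Lgen. Qed.

Lemma ideal_Ann N : ideal (Ann N).
Proof.
split; first by move=> x _; rewrite scale0r.
split; first by move=> a b Na Nb x Nx; rewrite scalerDl Na ?Nb ?addr0.
by move=> r a Na x Nx; rewrite -scalerA Na ?scaler0.
Qed.

Definition principal (a : R) : R -> Prop := fun r => exists s, r = a * s.

Lemma ideal_principal a : ideal (principal a).
Proof.
split; first by exists 0; rewrite mulr0.
split; first by move=> _ _ [s ->] [t ->]; exists (s + t); rewrite mulrDr.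
by move=> r _ [s ->]; exists (r * s); rewrite mulrCA.
Qed.

Lemma principal_id a : principal a a.
Proof. by exists 1; rewrite mulr1. Qed.

Definition colon N : R -> Prop := fun r => forall x, N (r *: x).

Lemma ideal_colon N : submodule N -> ideal (colon N).
Proof.
move=> [N0 [ND NS]]; split; first by move=> x; rewrite scale0r.
split; first by move=> a b Na Nb x; rewrite scalerDl; apply: ND.
by move=> r a Na x; rewrite -scalerA; apply: NS.
Qed.

Lemma nonzero_subP N : submodule N -> nonzero_sub N <-> exists2 x, N x & x <> 0.
Proof.
move=> [N0 _]; split=> [Nnz | [x Nx nx] N_0]; last by apply: nx; apply/N_0.
apply: NNPP => Nzero; apply: Nnz => x; split=> [Nx | ->] //.
by apply: NNPP => nx; apply: Nzero; exists x.
Qed.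

Lemma simple_subP N : submodule N -> nonzero_sub N ->
  (forall L x, submodule L -> sub_le L N -> L x -> x <> 0 -> sub_le N L) ->
  simple_sub N.
Proof.
move=> subN Nnz N_le; split=> //; split=> // L subL LN.
have [L0 | /(nonzero_subP subL) [x Lx nx]] := classic (sub_eq L (@zero_sub R M)).
  by left.
by right=> y; split=> [/LN // | ]; exact: N_le subL LN Lx nx y.
Qed.

Lemma simple_sub_le N L x :
  simple_sub N -> submodule L -> L x -> N x -> x <> 0 -> sub_le N L.
Proof.
move=> [subN [_ Nsimple]] subL Lx Nx nx y Ny.
have [LN0 | LN] := Nsimple _ (submoduleI subL subN) (fun _ => @proj2 _ _).
  by case: nx; apply/LN0.
exact: ((LN y).2 Ny).1.
Qed.

Lemma second_le_prod_IN N J r :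
  second N -> ideal J -> J r -> ~ Ann N r -> sub_le N (prod_IN J N).
Proof.
move=> [_ [_ Nsec]] idJ Jr nr.
have [JN | JN0] := Nsec J idJ; first by move=> x /JN.
by case: nr => x Nx; apply/JN0 => L _; apply.
Qed.

Lemma second_scale_surj N a x :
  second N -> ~ Ann N a -> N x -> exists2 y, N y & x = a *: y.
Proof.
move=> secN na Nx; have [[N0 [ND NS]] _] := secN.
have sub_aN : submodule (fun z => exists2 y, N y & z = a *: y).
  split; first by exists 0; rewrite ?scaler0.
  split=> [u v [y Ny ->] [z Nz ->] | r u [y Ny ->]].
    by exists (y + z); [exact: ND | rewrite scalerDr].
  by exists (r *: y); [exact: NS | rewrite !scalerA mulrC].
apply: (second_le_prod_IN secN (ideal_principal a) (principal_id a) na Nx sub_aN).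
by move=> b y [s ->] Ny; exists (s *: y); [exact: NS | rewrite scalerA].
Qed.

Lemma second_Ann_prime N r s : second N -> Ann N (r * s) -> ~ Ann N r -> Ann N s.
Proof.
move=> secN Nrs nr x Nx.
apply: (second_le_prod_IN secN (ideal_principal r) (principal_id r) nr Nx (submodule_ker s)).
by move=> _ y [t ->] Ny; rewrite scalerA mulrA mulrC [s * r]mulrC -scalerA Nrs ?scaler0.
Qed.

Lemma second_Ann_proper N : second N -> ~ Ann N 1.
Proof.
move=> [subN [Nnz _]] N1; have [x Nx nx] := (nonzero_subP subN).1 Nnz.
by apply: nx; rewrite -[x]scale1r N1.
Qed.

Lemma second_Ann_avoid (T : eqType) (I : T -> R -> Prop) (s : seq T) N :
  second N -> (forall j, ideal (I j)) ->
  (forall j, j \in s -> exists2 r, I j r & ~ Ann N r) ->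
  exists2 a, (forall j, j \in s -> I j a) & ~ Ann N a.
Proof.
move=> secN idI; elim: s => [_ | j s IH I_avoid].
  by exists 1 => //; exact: second_Ann_proper.
have [i si | a Ia na] := IH; first by apply: I_avoid; rewrite in_cons si orbT.
have [b Ib nb] := I_avoid j (mem_head j s).
exists (b * a); last by move=> /(second_Ann_prime secN)/(_ nb).
move=> i; rewrite in_cons => /predU1P [-> | si]; last exact: (idI i).2.2 _ _ (Ia i si).
by rewrite mulrC; exact: (idI j).2.2.
Qed.

(* With C a complement of N :&: ker a, write x = a y (N = a N) and y = z + c;
   then x = a c lies in C :&: (N :&: ker a) = 0. *)
Lemma second_scale_inj N a x : second N -> ~ Ann N a -> N x -> a *: x = 0 -> x = 0.
Proof.
move=> secN na Nx ax; have [subN _] := secN.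
have [C [subC [NkerC0 NkerC]]] := Mss (submoduleI subN (submodule_ker a)).
have [y Ny Ex] := second_scale_surj secN na Nx.
have [z [c [[Nz az] [Cc Ey]]]] := (NkerC y).2 I.
apply/NkerC0; split=> //; rewrite Ex Ey scalerDr az add0r.
exact: subC.2.2.
Qed.

Lemma comultiplication_second_simple :
  comultiplication_mod M -> forall N, second N -> simple_sub N.
Proof.
move=> Mcomul N secN; have [subN [Nnz _]] := secN.
apply: simple_subP => // L x subL LN Lx nx y Ny.
apply/(Mcomul L subL y) => r Lr.
suff Nr : Ann N r by exact: Nr.
apply: NNPP => nr; apply: nx.
exact: second_scale_inj secN nr (LN x Lx) (Lr x Lx).
Qed.

Section SecondRepresentation.
Variables (n : nat) (K : 'I_n -> M -> Prop).
Hypotheses (Krep : min_second_rep K) (Katt : att_eq_Min K).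

Lemma second_K i : second (K i).
Proof. by case: Krep => _ []. Qed.

Lemma submodule_K i : submodule (K i).
Proof. by case: (second_K i). Qed.

Lemma sum_K x : exists2 k : 'I_n -> M, (forall i, K i (k i)) & x = \sum_(i < n) k i.
Proof. by case: Krep => /(_ x) [_ /(_ I)] [k [Kk ->]] _; exists k. Qed.

Lemma Ann_K_not_le i j : i != j -> exists2 r, Ann (K j) r & ~ Ann (K i) r.
Proof.
move=> ij; apply: NNPP => Ann_le.
case: Krep => _ [_ [Ann_neq _]]; apply: (Ann_neq j i); first by rewrite eq_sym.
by apply: Katt => r Kjr; apply: NNPP => nr; apply: Ann_le; exists r.
Qed.

Definition separates i a := (forall j, j != i -> Ann (K j) a) /\ ~ Ann (K i) a.

Lemma separator_exists i : exists a, separates i a.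
Proof.
have [||a Ka na] := second_Ann_avoid (I := fun j => Ann (K j))
  (s := [seq j <- enum 'I_n | j != i]) (second_K i).
- by move=> j; exact: ideal_Ann.
- by move=> j; rewrite mem_filter eq_sym => /andP [ij _]; exact: Ann_K_not_le.
by exists a; split=> // j ji; apply: Ka; rewrite mem_filter ji mem_enum.
Qed.

Lemma separates_scale_sum i a k :
  separates i a -> (forall j, K j (k j)) -> a *: \sum_(j < n) k j = a *: k i.
Proof.
move=> [Ka _] Kk; rewrite scaler_sumr (bigD1 i) //= big1 ?addr0 // => j ji.
exact: Ka j ji _ (Kk j).
Qed.

Lemma separates_scale_in i a x : separates i a -> K i (a *: x).
Proof.
move=> sep; have [k Kk ->] := sum_K x.
rewrite (separates_scale_sum sep Kk); exact: (submodule_K i).2.2.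
Qed.

Lemma separates_prod_IN_eq0 i a J y :
  separates i a -> ideal_le J (Ann (K i)) -> prod_IN J (@full_sub R M) y -> a *: y = 0.
Proof.
move=> sep JK Jy; apply: (Jy _ (submodule_ker a)) => b x Jb _.
rewrite scalerA mulrC -scalerA.
exact: JK _ Jb _ (separates_scale_in x sep).
Qed.

Lemma separates_nonzero (x : M) : x <> 0 -> exists i a, separates i a /\ a *: x <> 0.
Proof.
move=> nx; have [k Kk Ex] := sum_K x.
have [i ki] : exists i, k i <> 0.
  apply: NNPP => k0; apply: nx; rewrite Ex big1 // => i _.
  by apply: NNPP => ki; apply: k0; exists i.
have [a sep] := separator_exists i.
exists i, a; split=> //; rewrite Ex (separates_scale_sum sep Kk).
by move=> /(second_scale_inj (second_K i) sep.2 (Kk i)).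
Qed.

Lemma mem_sum_prod_IN_Ann_K j x : sum_sub (prod_IN (Ann (K j)) (@full_sub R M)) (K j) x.
Proof.
have [k Kk ->] := sum_K x.
exists (\sum_(i < n | i != j) k i), (k j); split; last split => //.
  apply: submodule_sum => [|i ij]; first exact: submodule_prod_IN.
  have [r Kjr nr] := Ann_K_not_le ij.
  exact: prod_IN_le_full (second_le_prod_IN (second_K i) (ideal_Ann _) Kjr nr (Kk i)).
by rewrite (bigD1 j) //= addrC.
Qed.

Definition simple_components := forall i, simple_sub (K i).

Lemma multiplication_simple_components : multiplication_mod M <-> simple_components.
Proof.
split=> [Mmul i | Ksimple N subN].
  have [subK [Knz _]] := second_K i.
  apply: simple_subP => // L x subL LK Lx nx y Ky.
  have [J [idJ LJ]] := Mmul L subL.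
  have [a sep] := separator_exists i.
  have [r Jr nr] : exists2 r, J r & ~ Ann (K i) r.
    apply: NNPP => JK; apply: nx.
    apply: (second_scale_inj (second_K i) sep.2 (LK x Lx)).
    apply: (separates_prod_IN_eq0 sep _ ((LJ x).1 Lx)) => r Jr.
    by apply: NNPP => nr; apply: JK; exists r.
  by apply/LJ; exact: prod_IN_le_full (second_le_prod_IN (second_K i) idJ Jr nr Ky).
exists (colon N); split; first exact: ideal_colon.
move=> x; split=> [Nx | ]; last by apply=> // b m Nb _; exact: Nb.
have [k Kk Ex] := sum_K x; rewrite Ex.
apply: submodule_sum => [|j _]; first exact: submodule_prod_IN.
have [-> | nk] := classic (k j = 0); first exact: (submodule_prod_IN _ _).1.
have [a sep] := separator_exists j.
have ax : a *: x <> 0.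
  by rewrite Ex (separates_scale_sum sep Kk) => /(second_scale_inj (second_K j) sep.2 (Kk j)).
have KN := simple_sub_le (Ksimple j) subN (subN.2.2 a x Nx) (separates_scale_in x sep) ax.
have Na : colon N a by move=> m; apply/KN/separates_scale_in.
exact: prod_IN_le_full (second_le_prod_IN (second_K j) (ideal_colon subN) Na sep.2 (Kk j)).
Qed.

Lemma PS_hollow_simple_components :
  (forall N, PS_hollow N -> simple_sub N) <-> simple_components.
Proof.
split=> [hollow_simple i | Ksimple N [subN [Nnz Nhollow]]].
  apply: hollow_simple; have [subK [Knz _]] := second_K i.
  split=> //; split=> // J L idJ subL KJL.
  have [[r Jr nr] | JK] := classic (exists2 r, J r & ~ Ann (K i) r).
    by left=> x Kx; exact: prod_IN_le_full (second_le_prod_IN (second_K i) idJ Jr nr Kx).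
  have [a sep] := separator_exists i.
  right=> x Kx; have [y Ky ->] := second_scale_surj (second_K i) sep.2 Kx.
  have [z [l [Jz [Ll ->]]]] := KJL y Ky.
  rewrite scalerDr (separates_prod_IN_eq0 sep _ Jz) ?add0r; first exact: subL.2.2.
  by move=> r Jr; apply: NNPP => nr; apply: JK; exists r.
apply: simple_subP => // L x subL LN Lx nx.
have [j [a [sep ax]]] := separates_nonzero nx.
have KL := simple_sub_le (Ksimple j) subL (subL.2.2 a x Lx) (separates_scale_in x sep) ax.
have [NAM | NK] := Nhollow _ _ (ideal_Ann (K j)) (submodule_K j)
  (fun z _ => mem_sum_prod_IN_Ann_K j z); last by move=> y /NK /KL.
by case: ax; exact: separates_prod_IN_eq0 sep (fun _ Kr => Kr) (NAM x (LN x Lx)).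
Qed.

Lemma second_simple_components :
  (forall N, second N -> simple_sub N) <-> simple_components.
Proof.
split=> [second_simple i | Ksimple N secN]; first exact/second_simple/second_K.
have [subN [Nnz _]] := secN.
apply: simple_subP => // L x subL LN Lx nx y Ny.
have [j [a [sep ax]]] := separates_nonzero nx.
apply: (simple_sub_le (Ksimple j) subL (subL.2.2 a x Lx) (separates_scale_in x sep) ax).
have na : ~ Ann N a by move=> Na; apply/ax/Na/LN.
apply: (second_le_prod_IN secN (ideal_principal a) (principal_id a) na Ny (submodule_K j)).
by move=> _ m [s ->] _; rewrite -scalerA; exact: separates_scale_in.
Qed.

Lemma comultiplication_simple_components :
  comultiplication_mod M <-> simple_components.
Proof.
split=> [Mcomul i | Ksimple L subL y].
  exact: comultiplication_second_simple (second_K i).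
split=> [Ly r Lr | Ly]; first exact: Lr.
have [k Kk Ey] := sum_K y; rewrite Ey.
apply: submodule_sum => // i _.
have [LK0 | /(nonzero_subP (submoduleI subL (submodule_K i))) [x [Lx Kx] nx]] :=
  classic (sub_eq (fun x => L x /\ K i x) (@zero_sub R M)); last first.
  exact: simple_sub_le (Ksimple i) subL Lx Kx nx _ (Kk i).
have [a sep] := separator_exists i.
suff -> : k i = 0 by exact: subL.1.
apply: (second_scale_inj (second_K i) sep.2 (Kk i)).
rewrite -(separates_scale_sum sep Kk) -Ey; apply: Ly => x Lx.
by apply/LK0; split; [exact: subL.2.2 | exact: separates_scale_in].
Qed.

End SecondRepresentation.
End Modules.

Theorem corollary5p19 (R : comNzRingType) (M : lmodType R) (n : nat)
    (K : 'I_n -> M -> Prop) :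
  semisimple_mod M ->
  min_second_rep K ->
  att_eq_Min K ->
  (multiplication_mod M <->
     (forall N : M -> Prop, PS_hollow N -> simple_sub N)) /\
  ((forall N : M -> Prop, PS_hollow N -> simple_sub N) <->
     (forall N : M -> Prop, second N -> simple_sub N)) /\
  ((forall N : M -> Prop, second N -> simple_sub N) <->
     comultiplication_mod M).
Proof.
move=> Mss Krep Katt.
have := multiplication_simple_components Mss Krep Katt.
have := PS_hollow_simple_components Mss Krep Katt.
have := second_simple_components Mss Krep Katt.
have := comultiplication_simple_components Mss Krep Katt.
tauto.
Qed.
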